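(* Let $\mathbf{A}\in\mathbb{R}^{p\times q}$ have full row rank, let $\mathbf{W}\in\mathbb{R}^{q\times q}$ be symmetric positive semidefinite (the neural tangent kernel of the network), let $\eta>0$, and let $\mathbf{x}\in\mathbb{R}^q$ be the ground truth image. Suppose the measurements are $\mathbf{y}=\mathbf{A}\mathbf{x}+\mathbf{n}$ with $\mathbf{n}\in\mathbb{R}^p$, $\mathbf{n}\sim\mathcal{N}(\mathbf{0},\sigma^2\mathbf{I})$. Define the iterates $$\mathbf{z}_{t+1}=\mathbf{z}_t+\eta\,\mathbf{W}\left(\mathbf{A}^T\mathbf{y}-\mathbf{A}^T\mathbf{A}\mathbf{z}_t\right),\qquad \mathbf{z}_0=\mathbf{0}.$$ Then the mean squared error $\mathrm{MSE}_t:=\mathbb{E}_{\mathbf{n}}\|\mathbf{z}_t-\mathbf{x}\|_2^2$ at iteration $t$ is $$\mathrm{MSE}_t=\left\|\left(\mathbf{I}-\eta\mathbf{W}\mathbf{A}^T\mathbf{A}\right)^t\mathbf{x}\right\|_2^2+\sigma^2\sum_{i=1}^p\nu_{t,i}^2,$$ where $\nu_{t,1},\dots,\nu_{t,p}$ are the singular values of the matrix $\left(\mathbf{I}-(\mathbf{I}-\eta\mathbf{W}\mathbf{A}^T\mathbf{A})^t\right)\mathbf{A}^{\dagger}$.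
   Context: $\mathbf{A}^\dagger$ denotes the Moore–Penrose pseudo-inverse of $\mathbf{A}$. The recursion models gradient-descent training of a deep image prior network with loss $\|\mathbf{A}f_\theta(\mathbf{z})-\mathbf{y}\|_2^2$ in the regime where the neural tangent kernel $\mathbf{W}$ stays fixed, with $\mathbf{z}_t$ the network output at iteration $t$. The MSE is decomposed as squared norm of the bias $\mathbb{E}_{\mathbf{n}}[\mathbf{z}_t]-\mathbf{x}$ plus the trace of the covariance of $\mathbf{z}_t$. *)

From HB Require Import structures.
From mathcomp Require Import all_boot all_order all_algebra.
From mathcomp Require Import all_classical all_reals all_analysis.
Set Implicit Arguments. Unset Strict Implicit. Unset Printing Implicit Defensive.
Import Order.TTheory GRing.Theory Num.Theory.
Local Open Scope classical_set_scope.
Local Open Scope ring_scope.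

Section Defs.
Variable R : realType.

Definition sqnorm (n : nat) (v : 'cV[R]_n) : R := \sum_(i < n) (v i 0) ^+ 2.

Definition is_pinv (m n : nat) (A : 'M[R]_(m, n)) (Ad : 'M[R]_(n, m)) : Prop :=
  [/\ A *m Ad *m A = A, Ad *m A *m Ad = Ad,
      (A *m Ad)^T = A *m Ad & (Ad *m A)^T = Ad *m A].

Definition is_psd (n : nat) (W : 'M[R]_n) : Prop :=
  W^T = W /\ forall v : 'cV[R]_n, 0 <= (v^T *m W *m v) 0 0.

(* nu lists the (n) singular values of B : 'M_(m, n) with multiplicity:
   nonnegative, and their squares are the eigenvalues of B^T B
   (with algebraic multiplicity). *)
Definition is_singular_values (m n : nat) (B : 'M[R]_(m, n)) (nu : 'I_n -> R)
  : Prop :=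
  (forall i, 0 <= nu i) /\
  char_poly (B^T *m B) = \prod_(i < n) ('X - ((nu i) ^+ 2)%:P).

Fixpoint dip_iter (p q : nat) (A : 'M[R]_(p, q)) (W : 'M[R]_q) (eta : R)
  (y : 'cV[R]_p) (t : nat) : 'cV[R]_q :=
  match t with
  | 0 => 0
  | t'.+1 => let z := dip_iter A W eta y t' in
             z + eta *: (W *m (A^T *m y - A^T *m A *m z))
  end.

(* Expectation of g(n1,...,nk) for n1,...,nk i.i.d. N(0, sigma^2),
   as an iterated integral against the normal law (sigma = std. dev.). *)
Fixpoint gaussE (sigma : R) (k : nat) (g : seq R -> R) : R :=
  match k with
  | 0 => g [::]
  | k'.+1 => Rintegral (normal_prob 0 sigma) setT
               (fun a : R => gaussE sigma k' (fun s => g (a :: s)))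
  end.

Definition vec_of_seq (p : nat) (s : seq R) : 'cV[R]_p := \col_(i < p) nth 0 s i.

Definition MSE (p q : nat) (A : 'M[R]_(p, q)) (W : 'M[R]_q) (eta sigma : R)
  (x : 'cV[R]_q) (t : nat) : R :=
  gaussE sigma p (fun s =>
    sqnorm (dip_iter A W eta (A *m x + vec_of_seq p s) t - x)).

End Defs.

(* With [M = I - eta W A^T A], full row rank gives [A A^+ = I], so [A^T y = A^T A (A^+ y)] and
   the iteration reads [z_(t+1) = z_t + (I - M)(A^+ y - z_t)], whence [z_t = (I - M^t) A^+ y].
   Since [I - M^t] ends with the factor [I - M = eta W A^T A] and [A A^+ A = A], we get
   [(I - M^t) A^+ A = I - M^t], so [z_t - x = - M^t x + B n] with [B = (I - M^t) A^+].
   Expanding the square, the noise enters linearly, with mean zero, and quadratically, where only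
   the diagonal moments [E n_j^2 = sigma^2] survive: [MSE_t = |M^t x|^2 + sigma^2 tr (B^T B)], and
   [tr (B^T B)] is the sum of the eigenvalues of [B^T B], the squared singular values of [B].
   The Gaussian moments are computed against the density: [E n = 0] by symmetry, and
   [E n^2 = sigma^2] by integrating [x^2 exp (- x^2 / (2 sigma^2))] by parts on [[0, +oo[]. *)

From HB Require Import structures.
From mathcomp Require Import all_boot all_order all_algebra.
From mathcomp Require Import all_classical all_reals all_analysis.
From mathcomp Require Import measurable_realfun normal_distribution.
From mathcomp Require Import ring lra.
Set Implicit Arguments. Unset Strict Implicit. Unset Printing Implicit Defensive.
Import Order.TTheory GRing.Theory Num.Theory.
Import numFieldNormedType.Exports.
Local Open Scope classical_set_scope.
Local Open Scope ring_scope.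

Section integral_normal_prob.
Variable R : realType.
Local Notation mu := (@lebesgue_measure R).
Local Open Scope ereal_scope.

Lemma ge0_integral_reflect (f : R -> \bar R) : (forall x, 0 <= f x) ->
  measurable_fun [set: R] f -> \int[mu]_x f (- x)%R = \int[mu]_x f x.
Proof.
move=> f0 mf.
transitivity (\int[mu]_(x in (-%R : _ -> measurableTypeR R) @^-1` setT) f (- x)%R).
  by rewrite preimage_setT.
rewrite -ge0_integral_pushforward //=.
by apply: eq_measure_integral => //= A mA _; exact: lebesgue_measureN.
Qed.

Lemma ge0_integral_normal_prob (m s : R) (f : R -> \bar R) :
  (forall x, 0 <= f x) -> measurable_fun [set: R] f ->
  \int[normal_prob m s]_x f x = \int[mu]_x (f x * (normal_pdf m s x)%:E).
Proof.
move=> f0 mf.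
have nm : normal_prob m s `<< mu by exact: normal_prob_dominates.
rewrite -(Radon_Nikodym_SigmaFinite.change_of_variables nm) //.
have mpdf : measurable_fun [set: R] (EFin \o normal_pdf m s).
  by apply/measurable_EFinP; exact: measurable_normal_pdf.
apply: ae_eq_integral => //.
- apply: emeasurable_funM => //.
  exact: measurable_int (Radon_Nikodym_SigmaFinite.f_integrable _).
- exact: emeasurable_funM.
- apply: ae_eqe_mul2l; apply: integral_ae_eq => //.
  + exact: Radon_Nikodym_SigmaFinite.f_integrable.
  + by move=> E _ mE; rewrite -Radon_Nikodym_SigmaFinite.f_integral.
Qed.

End integral_normal_prob.

Section normal_moments.
Variable R : realType.
Local Notation mu := (@lebesgue_measure R).
Variable s : R.
Hypothesis s_neq0 : s != 0.
Local Notation phi := (normal_fun 0 s).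

Let s22_gt0 : 0 < s ^+ 2 *+ 2.
Proof. by rewrite pmulrn_lgt0 // exprn_even_gt0 //= s_neq0 orbT. Qed.

Lemma normal_fun0N x : phi (- x) = phi x.
Proof. by rewrite /normal_fun !subr0 sqrrN. Qed.

Lemma normal_pdf0N x : normal_pdf 0 s (- x) = normal_pdf 0 s x.
Proof. by rewrite /normal_pdf (negbTE s_neq0) normal_fun0N. Qed.

Lemma normal_pdf0E x : normal_pdf 0 s x = normal_peak s * phi x.
Proof. by rewrite /normal_pdf (negbTE s_neq0). Qed.

Lemma is_derive_normal_fun (x : R) : is_derive x 1 phi (- (x / s ^+ 2) * phi x).
Proof.
pose h := (- (s ^+ 2 *+ 2)^-1) \*: (@id R ^+ 2).
have phiE : phi = expR \o h.
  apply/funext => y; rewrite /normal_fun /h /= subr0; congr expR.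
  by rewrite exprfctE /= /GRing.scale /= mulrC mulNr mulrN.
have dh : is_derive x 1 h ((- (s ^+ 2 *+ 2)^-1) *: ((2%:R * x ^+ 1) *: 1)).
  by apply: is_deriveZ; apply: is_deriveX.
have dhx : derivable h x 1 by case: dh.
have de : derivable expR (h x) 1 by exact: derivable_expR.
have dphi : derivable phi x 1.
  by rewrite phiE; apply/derivable1_diffP; apply: differentiable_comp; apply/derivable1_diffP.
apply: DeriveDef => //; rewrite -derive1E [in LHS]phiE derive1_comp //.
rewrite !derive1E !derive_val phiE /= mulrC; congr (_ * _).
by rewrite expr1 scaler1 /GRing.scale /=; field.
Qed.

Lemma continuous_normal_fun : continuous phi.
Proof.
move=> x; apply/differentiable_continuous/derivable1_diffP.
by have [] := is_derive_normal_fun x.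
Qed.

Lemma mul_normal_fun_ub x : 0 < x -> x * phi x <= (s ^+ 2 *+ 2) / x.
Proof.
(* [expR u >= 1 + u] with [u = x^2 / (2 s^2)] *)
move=> x0; rewrite /normal_fun subr0 mulNr expRN.
set E := expR _; have E0 : 0 < E by apply: expR_gt0.
rewrite -subr_ge0.
have -> : s ^+ 2 *+ 2 / x - x / E = (s ^+ 2 *+ 2 * E - x * x) / (x * E).
  by field; rewrite !gt_eqF.
apply: divr_ge0; last by rewrite mulr_ge0 // ltW.
rewrite subr_ge0.
apply: (le_trans _ (ler_wpM2l (ltW s22_gt0) (expR_ge1Dx _))).
by rewrite mulrDr mulr1 mulrCA mulfV ?gt_eqF // mulr1 -expr2 lerDr ltW.
Qed.

Lemma mul_normal_fun_cvgy : (x * phi x) @[x --> +oo] --> 0.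
Proof.
apply: (@squeeze_cvgr _ _ _ _ (cst 0) (fun x => (s ^+ 2 *+ 2) / x)).
- near=> x.
  have x0 : 0 < x by near: x; apply: nbhs_pinfty_gt; rewrite num_real.
  by rewrite mulr_ge0 ?normal_fun_ge0 ?(ltW x0) //= mul_normal_fun_ub.
- exact: cvg_cst.
- rewrite -[X in _ --> X](mulr0 (s ^+ 2 *+ 2)); apply: cvgM; first exact: cvg_cst.
  apply: (@gtr0_cvgV0 _ _ _ _ (fun x : R => x) _).2; last exact: cvg_id.
  by near=> x; near: x; apply: nbhs_pinfty_gt; exact: num_real.
Unshelve. all: end_near. Qed.

Let integrable_normal_fun_itv a b : mu.-integrable `[a, b] (EFin \o phi).
Proof.
apply: continuous_compact_integrable; first exact: segment_compact.
by apply: continuous_subspaceT; exact: continuous_normal_fun.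
Qed.

Let Phi x := \int[mu]_(t in `[0, x]) phi t.

Let is_derive_Phi x : 0 < x -> derivable Phi x 1 /\ (Phi^`())%classic x = phi x.
Proof.
move=> x0; apply: (@continuous_FTC1_closed R phi 0 x (x + 1)) => //.
- by rewrite ltrDl.
- exact: continuous_normal_fun.
Qed.

Let Phi_cvg0 : Phi x @[x --> 0^'+] --> Phi 0.
Proof.
have := @parameterized_integral_continuous R 0 1 phi ler01 (integrable_normal_fun_itv 0 1).
by move/(continuous_within_itvP _ ltr01) => [_ + _].
Qed.

Let Phi0 : Phi 0 = 0.
Proof. by rewrite /Phi set_itv1 Rintegral_set1. Qed.

Local Open Scope ereal_scope.

Let EFin_Phi x : (Phi x)%:E = \int[mu]_(t in `[0%R, x]) (phi t)%:E.
Proof.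
by rewrite /Phi /Rintegral fineK //; exact: integrable_fin_num (integrable_normal_fun_itv 0%R x).
Qed.

Let half := \int[mu]_(x in `[0%R, +oo[) (phi x)%:E.

Let le_Phi_half x : (Phi x)%:E <= half.
Proof.
rewrite EFin_Phi; apply: ge0_subset_integral => //=.
- by apply/measurable_EFinP; exact: measurable_funS (measurable_normal_fun _ _).
- by move=> ? _; rewrite lee_fin normal_fun_ge0.
- by apply: subset_itvl; rewrite bnd_simp.
Qed.

Let integral_normal_fun : \int[mu]_x (phi x)%:E = (normal_peak s)^-1%:E.
Proof.
have peak_neq0 : normal_peak s != 0%R by rewrite gt_eqF ?normal_peak_gt0.
have := integral_normal_pdf 0 s.
under eq_integral do rewrite normal_pdf0E EFinM.
rewrite ge0_integralZl_EFin ?normal_peak_ge0 //; last 2 first.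
- by move=> x _; rewrite lee_fin normal_fun_ge0.
- by apply/measurable_EFinP; exact: measurable_normal_fun.
by move/(congr1 (fun y => (normal_peak s)^-1%:E * y)); rewrite muleA -EFinM mulVf // mul1e mule1.
Qed.

Let half_fin_num : half \is a fin_num.
Proof.
rewrite ge0_fin_numE; last by apply: integral_ge0 => x _; rewrite lee_fin normal_fun_ge0.
apply: (@le_lt_trans _ _ (\int[mu]_x (phi x)%:E)); last by rewrite integral_normal_fun ltry.
apply: ge0_subset_integral => //=.
- by apply/measurable_EFinP; exact: measurable_normal_fun.
- by move=> ? _; rewrite lee_fin normal_fun_ge0.
Qed.

Let integral_normal_fun_half : \int[mu]_x (phi x)%:E = 2%:E * half.
Proof.
rewrite ge0_symfun_integralT //.
- rewrite /half (_ : [set x | _] = `[0%R, +oo[%classic) //.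
  by apply/seteqP; split => x /=; rewrite in_itv /= andbT.
- exact: normal_fun_ge0.
- exact: continuous_normal_fun.
- by move=> x /=; rewrite normal_fun0N.
Qed.

Local Close Scope ereal_scope.

Let Phi_cvgy : Phi x @[x --> +oo] --> fine half.
Proof.
have ndPhi : nondecreasing_fun Phi.
  move=> x y xy; rewrite -lee_fin !EFin_Phi; apply: ge0_subset_integral => //=.
  - by apply/measurable_EFinP; exact: measurable_funS (measurable_normal_fun _ _).
  - by move=> ? _; rewrite lee_fin normal_fun_ge0.
  - exact: subset_itvl.
have ubPhi : has_ubound (range Phi).
  by exists (fine half) => _ [x _ <-]; rewrite -lee_fin (fineK half_fin_num) le_Phi_half.
suff <- : sup (range Phi) = fine half by exact: nondecreasing_cvgr.
have Phin := (cvg_pinftyP _ _).1 (nondecreasing_cvgr ndPhi ubPhi) _ cvgr_idn.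
have := @ge0_cvgn_integral R mu phi (normal_fun_ge0 0 s) (measurable_normal_fun _ _).
rewrite -/half -(fineK half_fin_num) => /fine_cvg /= halfn.
exact: (cvg_unique _ Phin halfn).
Qed.

Let continuous_sqr_normal_fun : continuous (fun x : R => x ^+ 2 * phi x).
Proof. by move=> x; apply: cvgM; [exact: exprn_continuous|exact: continuous_normal_fun]. Qed.

Let sqr_normal_fun_ge0 x : 0 <= x ^+ 2 * phi x.
Proof. by rewrite mulr_ge0 ?sqr_ge0 ?normal_fun_ge0. Qed.

(* [s^2 (Phi x - x phi x)] is an antiderivative of [x^2 phi x] that tends to [s^2 half]. *)
Let integral_sqr_normal_fun_half :
  (\int[mu]_(x in `[0%R, +oo[) (x ^+ 2 * phi x)%:E = (s ^+ 2 * fine half)%:E)%E.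
Proof.
pose F := s ^+ 2 \*: (Phi - @id R * phi).
have FE x : F x = s ^+ 2 * (Phi x - x * phi x) by rewrite /F !fctE.
have dphi x : derivable phi x 1 by have [] := is_derive_normal_fun x.
have dxphi x : derivable (@id R * phi) x 1 by apply: derivableM.
have dF x : 0 < x -> derivable (Phi - @id R * phi) x 1.
  by move=> x0; apply: derivableB => //; case: (is_derive_Phi x0).
have := @ge0_continuous_FTC2y R (fun x => x ^+ 2 * phi x) F 0 (s ^+ 2 * fine half).
rewrite FE Phi0 mul0r subr0 mulr0 sube0; apply => //.
- by apply: continuous_subspaceT.
- under eq_fun do rewrite FE.
  apply: cvgM; first exact: cvg_cst.
  by rewrite -[fine half]subr0; exact: cvgB Phi_cvgy mul_normal_fun_cvgy.
- by move=> x x0; apply: derivableZ; exact: dF.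
- under eq_fun do rewrite FE.
  suff : (fun x => s ^+ 2 * (Phi x - x * phi x)) @ 0^'+ --> s ^+ 2 * (Phi 0 - 0 * phi 0).
    by rewrite Phi0 mul0r subr0 mulr0.
  apply: cvgM; first exact: cvg_cst.
  apply: cvgB; first exact: Phi_cvg0.
  apply: cvg_at_right_filter.
  by apply: cvgM; [exact: cvg_id|exact: continuous_normal_fun].
- move=> x; rewrite in_itv /= andbT => x0.
  have [dPhi Phi'] := is_derive_Phi x0.
  rewrite derive1E deriveZ; last exact: dF.
  have phi'x := is_derive_normal_fun x.
  rewrite deriveB // deriveM // derive_id -derive1E Phi' derive_val /GRing.scale /=.
  by field.
Qed.

Lemma integral_sqr_normal_pdf :
  (\int[mu]_x ((x ^+ 2 * normal_pdf 0 s x)%:E) = (s ^+ 2)%:E)%E.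
Proof.
have peak_half : normal_peak s * (2 * fine half) = 1.
  have := integral_normal_fun_half; rewrite integral_normal_fun -(fineK half_fin_num) -EFinM.
  by case=> <-; rewrite mulfV // gt_eqF ?normal_peak_gt0.
under eq_integral do rewrite normal_pdf0E mulrCA EFinM.
rewrite ge0_integralZl_EFin ?normal_peak_ge0 //; last 2 first.
- by move=> x _; rewrite lee_fin.
- by apply/measurable_EFinP; exact: continuous_measurable_fun.
rewrite ge0_symfun_integralT //; last by move=> x /=; rewrite normal_fun0N sqrrN.
rewrite (_ : [set x | _] = `[0%R, +oo[%classic); last first.
  by apply/seteqP; split => x /=; rewrite in_itv /= andbT.
rewrite integral_sqr_normal_fun_half -!EFinM; congr EFin.
suff -> : normal_peak s * (2 * (s ^+ 2 * fine half)) =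
    s ^+ 2 * (normal_peak s * (2 * fine half)) by rewrite peak_half mulr1.
by ring.
Qed.

Local Notation nu := (normal_prob 0 s).
Local Open Scope ereal_scope.

Lemma integral_normal_prob_sqr : \int[nu]_x (x ^+ 2)%:E = (s ^+ 2)%:E.
Proof.
rewrite ge0_integral_normal_prob //; last 2 first.
- by move=> x; rewrite lee_fin sqr_ge0.
- by apply/measurable_EFinP; exact: measurable_funX.
by rewrite -integral_sqr_normal_pdf; apply: eq_integral => x _; rewrite EFinM.
Qed.

Lemma integrable_normal_prob_sqr : nu.-integrable setT (fun x => (x ^+ 2)%:E).
Proof.
apply/integrableP; split; first by apply/measurable_EFinP; exact: measurable_funX.
under eq_integral do rewrite gee0_abs ?lee_fin ?sqr_ge0 //.
by rewrite integral_normal_prob_sqr ltry.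
Qed.

Lemma integrable_normal_prob_id : nu.-integrable setT (fun x => x%:E).
Proof.
apply: (@le_integrable _ _ _ nu setT measurableT _ (fun x => (1 + x ^+ 2)%R%:E)).
- by apply/measurable_EFinP.
- move=> x _; rewrite !abse_EFin lee_fin [`|(1 + _)%R|%R]ger0_norm ?addr_ge0 ?sqr_ge0 //.
  have [x1|x1] := leP `|x|%R 1%R; first by rewrite (le_trans x1) // lerDl sqr_ge0.
  by rewrite -real_normK ?num_real //; move: x1; set y := `|x|%R => x1; nra.
- rewrite (_ : (fun x => _) = (fun=> 1%:E) \+ (fun x => (x ^+ 2)%:E)); last first.
    by apply/funext => y; rewrite /= EFinD.
  by apply: integrableD => //; [exact: finite_measure_integrable_cst|exact: integrable_normal_prob_sqr].
Qed.

(* [x^+] and [x^-] have the same integral by the symmetry of the density. *)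
Lemma integral_normal_prob_id : \int[nu]_x x%:E = 0.
Proof.
rewrite integralE.
suff -> : \int[nu]_x ((fun y : R => y%:E)^\- x) = \int[nu]_x ((fun y : R => y%:E)^\+ x).
  rewrite subee //; apply: (integrable_fin_num measurableT).
  exact: (integrable_funepos measurableT integrable_normal_prob_id).
have mid : measurable_fun [set: R] (fun y : R => y%:E) by apply/measurable_EFinP.
rewrite !ge0_integral_normal_prob //; last 2 first.
- exact: measurable_funepos.
- exact: measurable_funeneg.
rewrite -ge0_integral_reflect; last 2 first.
- by move=> x; rewrite mule_ge0 ?funeneg_ge0 // lee_fin normal_pdf_ge0.
- apply: emeasurable_funM; first exact: measurable_funeneg.
  by apply/measurable_EFinP; exact: measurable_normal_pdf.
apply: eq_integral => x _; rewrite normal_pdf0N funenegE funeposE /=.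
by rewrite opprK.
Qed.

Local Close Scope ereal_scope.

Lemma Rintegral_normal_prob_quadratic (a b c : R) :
  \int[nu]_(x in setT) (a + b * x + c * x ^+ 2) = a + c * s ^+ 2.
Proof.
have i1 : nu.-integrable setT (EFin \o (fun=> a)).
  exact: finite_measure_integrable_cst.
have ix : nu.-integrable setT (EFin \o ( *%R b)).
  rewrite (_ : EFin \o _ = (fun x => b%:E * x%:E)%E); last by apply/funext => y; rewrite /= EFinM.
  exact: integrableZl integrable_normal_prob_id.
have ix2 : nu.-integrable setT (EFin \o (fun x => c * x ^+ 2)).
  rewrite (_ : EFin \o _ = (fun x => c%:E * (x ^+ 2)%:E)%E); last by apply/funext => y; rewrite /= EFinM.
  exact: integrableZl integrable_normal_prob_sqr.
rewrite RintegralD //; last first.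
  rewrite (_ : EFin \o _ = (EFin \o (fun=> a)) \+ (EFin \o ( *%R b))); last by apply/funext => y; rewrite /= EFinD.
  exact: integrableD.
rewrite RintegralD // Rintegral_cst // (_ : fine (nu _) = 1) ?mulr1; last by rewrite probability_setT.
rewrite RintegralZl //; last exact: integrable_normal_prob_id.
rewrite RintegralZl //; last exact: integrable_normal_prob_sqr.
by rewrite /Rintegral integral_normal_prob_id integral_normal_prob_sqr /= mulr0 addr0.
Qed.

End normal_moments.

Section quadratic_form.
Variable R : realType.

(* Coefficients are indexed by [nat]: [gaussE] integrates out the head of the list, which shifts
   the indices of the remaining coordinates. *)
Definition quad_form (c : R) (b : nat -> R) (Q : nat -> nat -> R) (k : nat) (l : seq R) :=
  c + \sum_(0 <= j < k) b j * l`_j + \sum_(0 <= j < k) \sum_(0 <= i < k) Q j i * (l`_j * l`_i).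

Lemma quad_form_cons c b Q k a l :
  quad_form c b Q k.+1 (a :: l) =
  quad_form (c + b 0%N * a + Q 0%N 0%N * a ^+ 2)
    (fun j => b j.+1 + (Q 0%N j.+1 + Q j.+1 0%N) * a) (fun j i => Q j.+1 i.+1) k l.
Proof.
rewrite /quad_form !big_nat_recl //=.
have -> : \sum_(0 <= j < k) \sum_(0 <= i < k.+1) Q j.+1 i * (l`_j * (a :: l)`_i) =
    \sum_(0 <= j < k) Q j.+1 0%N * (l`_j * a) +
    \sum_(0 <= j < k) \sum_(0 <= i < k) Q j.+1 i.+1 * (l`_j * l`_i).
  by rewrite -big_split; apply: eq_bigr => j _; rewrite big_nat_recl.
have -> : \sum_(0 <= j < k) (b j.+1 + (Q 0%N j.+1 + Q j.+1 0%N) * a) * l`_j =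
    \sum_(0 <= j < k) b j.+1 * l`_j + \sum_(0 <= j < k) Q 0%N j.+1 * (a * l`_j) +
    \sum_(0 <= j < k) Q j.+1 0%N * (l`_j * a).
  by rewrite -!big_split; apply: eq_bigr => j _ /=; ring.
ring.
Qed.

Lemma gaussE_quad_form (s : R) c b Q k : s != 0 ->
  gaussE s k (quad_form c b Q k) = c + s ^+ 2 * \sum_(0 <= j < k) Q j j.
Proof.
move=> s_neq0; elim: k c b Q => [|k IH] c b Q /=.
  by rewrite /quad_form !big_geq // mulr0 !addr0.
have -> : (fun a => gaussE s k (fun l => quad_form c b Q k.+1 (a :: l))) =
    fun a => c + s ^+ 2 * \sum_(0 <= j < k) Q j.+1 j.+1 + b 0%N * a + Q 0%N 0%N * a ^+ 2.
  apply/funext => a; under eq_fun do rewrite quad_form_cons.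
  by rewrite IH; ring.
by rewrite Rintegral_normal_prob_quadratic // big_nat_recl //; ring.
Qed.

End quadratic_form.

Section gaussian_sqnorm.
Variable R : realType.

Definition ext0 n (f : 'I_n -> R) (j : nat) : R := if insub j is Some i then f i else 0.

Lemma ext0_ord n (f : 'I_n -> R) (i : 'I_n) : ext0 f i = f i.
Proof. by rewrite /ext0 valK. Qed.

Lemma sqnormN n (v : 'cV[R]_n) : sqnorm (- v) = sqnorm v.
Proof. by apply: eq_bigr => i _; rewrite mxE sqrrN. Qed.

Lemma sqnorm_add_mulmx q p (u : 'cV[R]_q) (B : 'M[R]_(q, p)) (v : 'cV[R]_p) :
  sqnorm (u + B *m v) = sqnorm u + \sum_(j < p) 2 * (u^T *m B) 0 j * v j 0 +
    \sum_(j < p) \sum_(k < p) (B^T *m B) j k * (v j 0 * v k 0).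
Proof.
have sqrE i : ((u + B *m v) i 0) ^+ 2 = u i 0 ^+ 2 +
    \sum_(j < p) 2 * u i 0 * B i j * v j 0 +
    \sum_(j < p) \sum_(k < p) B i j * B i k * (v j 0 * v k 0).
  rewrite mxE; set S := (B *m v) i 0.
  have -> : (u i 0 + S) ^+ 2 = u i 0 ^+ 2 + 2 * u i 0 * S + S * S by ring.
  rewrite /S mxE mulr_sumr mulr_suml; congr (_ + _ + _); apply: eq_bigr => j _; first by ring.
  by rewrite mulr_sumr; apply: eq_bigr => k _; ring.
rewrite /sqnorm (eq_bigr _ (fun i _ => sqrE i)) !big_split /=; congr (_ + _ + _).
  rewrite exchange_big; apply: eq_bigr => j _; rewrite !mxE mulr_sumr mulr_suml.
  by apply: eq_bigr => i _; rewrite mxE; ring.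
rewrite exchange_big; apply: eq_bigr => j _; rewrite exchange_big; apply: eq_bigr => k _.
by rewrite !mxE mulr_suml; apply: eq_bigr => i _; rewrite mxE.
Qed.

Lemma gaussE_sqnorm_add_mulmx (s : R) q p (u : 'cV[R]_q) (B : 'M[R]_(q, p)) : s != 0 ->
  gaussE s p (fun l => sqnorm (u + B *m vec_of_seq p l)) =
  sqnorm u + s ^+ 2 * \tr (B^T *m B).
Proof.
move=> s_neq0.
pose b := ext0 (fun j => 2 * (u^T *m B) 0 j).
pose Q j k := ext0 (fun j' => ext0 (fun k' => (B^T *m B) j' k') k) j.
have -> : (fun l => sqnorm (u + B *m vec_of_seq p l)) = quad_form (sqnorm u) b Q p.
  apply/funext => l; rewrite sqnorm_add_mulmx /quad_form !big_mkord.
  have vE i : vec_of_seq p l i 0 = l`_i by rewrite mxE.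
  congr (_ + _ + _); apply: eq_bigr => j _; first by rewrite vE /b ext0_ord.
  by rewrite big_mkord; apply: eq_bigr => k _; rewrite !vE /Q !ext0_ord.
by rewrite gaussE_quad_form // big_mkord; congr (_ + _ * _); apply: eq_bigr => j _; rewrite /Q !ext0_ord.
Qed.

End gaussian_sqnorm.

Lemma mxtrace_mulTmx_singular_values (R : realType) m n (B : 'M[R]_(m, n)) nu :
  is_singular_values B nu -> \tr (B^T *m B) = \sum_(i < n) nu i ^+ 2.
Proof.
case: n B nu => [|n] B nu [_ charE]; first by rewrite /mxtrace !big_ord0.
set sv2 := [seq nu i ^+ 2 | i <- index_enum 'I_n.+1].
have size_sv2 : size sv2 = n.+1 by rewrite size_map /index_enum unlock -enumT size_enum_ord.
apply: oppr_inj; rewrite -char_poly_trace // charE.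
have -> : \prod_(i < n.+1) ('X - (nu i ^+ 2)%:P) = \prod_(a <- sv2) ('X - a%:P).
  by rewrite big_map.
by rewrite -{1}size_sv2 coefPn_prod_XsubC ?size_sv2 // big_map.
Qed.

Section gradient_descent_iterates.
Variables (R : realType) (p q : nat) (A : 'M[R]_(p, q)) (W : 'M[R]_q) (eta : R).
Variable Ad : 'M[R]_(q, p).
Hypotheses (A_row_free : row_free A) (A_Ad_A : A *m Ad *m A = A).

Lemma row_free_mulmx_ginv : A *m Ad = 1%:M.
Proof. by apply: (row_free_inj A_row_free); rewrite A_Ad_A mul1mx. Qed.

Local Notation N := (eta *: (W *m A^T *m A)).
Local Notation M := (1%:M - N).

Let N_Ad_A : N *m Ad *m A = N.
Proof. by rewrite -!scalemxAl -!mulmxA (mulmxA A) A_Ad_A. Qed.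

Lemma mulmx_ginv_subr_exp t : (1%:M - M ^+ t) *m Ad *m A = 1%:M - M ^+ t.
Proof.
elim: t => [|t IH]; first by rewrite expr0 subrr !mul0mx.
have -> : 1%:M - M ^+ t.+1 = (1%:M - M ^+ t) + M ^+ t *m N.
  by rewrite exprSr -mulmxE mulmxBr mulmx1 opprB addrCA addrC.
by rewrite mulmxDl mulmxDl IH -(mulmxA _ N) -(mulmxA _ (N *m Ad)) N_Ad_A.
Qed.

Let exprSE t : M ^+ t.+1 = M ^+ t - N *m M ^+ t.
Proof. by rewrite exprS -mulmxE mulmxBl mul1mx. Qed.

Let dip_iterS t y :
  dip_iter A W eta y t.+1 = dip_iter A W eta y t + N *m (Ad *m y - dip_iter A W eta y t).
Proof.
rewrite /=; congr (_ + _).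
by rewrite -scalemxAl !mulmxBr -!mulmxA (mulmxA A Ad) row_free_mulmx_ginv mul1mx.
Qed.

Lemma dip_iterE t y : dip_iter A W eta y t = (1%:M - M ^+ t) *m Ad *m y.
Proof.
elim: t => [|t IH]; first by rewrite expr0 subrr !mul0mx.
rewrite dip_iterS IH -!(mulmxA _ Ad y) mulmxBl mul1mx subKr.
by rewrite exprSE mulmxBl mul1mx mulmxBl (mulmxA N) opprB addrA addrAC.
Qed.

Lemma dip_iter_error t x n :
  dip_iter A W eta (A *m x + n) t - x = - (M ^+ t *m x) + (1%:M - M ^+ t) *m Ad *m n.
Proof.
rewrite dip_iterE mulmxDr mulmxA mulmx_ginv_subr_exp mulmxBl mul1mx.
by rewrite addrAC (addrC x) addrK.
Qed.

End gradient_descent_iterates.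

Theorem theorem2 (R : realType) (p q : nat) (A : 'M[R]_(p, q)) (W : 'M[R]_q)
  (eta sigma : R) (x : 'cV[R]_q) (Ad : 'M[R]_(q, p)) (t : nat) (nu : 'I_p -> R) :
  \rank A = p ->
  is_psd W ->
  0 < eta ->
  0 < sigma ->
  is_pinv A Ad ->
  is_singular_values
    ((1%:M - (1%:M - eta *: (W *m A^T *m A)) ^+ t) *m Ad) nu ->
  MSE A W eta sigma x t =
    sqnorm ((1%:M - eta *: (W *m A^T *m A)) ^+ t *m x)
    + sigma ^+ 2 * \sum_(i < p) (nu i) ^+ 2.
Proof.
move=> rankA _ _ sigma_gt0 [A_Ad_A _ _ _] nu_sv.
have A_row_free : row_free A by rewrite /row_free rankA.
rewrite /MSE; under eq_fun do rewrite (dip_iter_error W eta A_row_free A_Ad_A).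
by rewrite gaussE_sqnorm_add_mulmx ?gt_eqF // sqnormN (mxtrace_mulTmx_singular_values nu_sv).
Qed.
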